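(* Let $n\ge3$ and $1<\alpha\le\sqrt2$. Then the set of minimal vectors of $D_n^\alpha$ is $S(D_n^\alpha)=\{\pm\mathbf{b}_1,\dots,\pm\mathbf{b}_n\}$. In particular $\lambda_1^2(D_n^\alpha)=2$ and $D_n^\alpha$ is generic well-rounded.
   Context: Let $\mathbf{e}_1,\dots,\mathbf{e}_n$ be the standard basis of $\mathbb{R}^n$. For $n\ge3$, $1\le\alpha\le\sqrt2$ and $\overline\alpha:=\sqrt{2-\alpha^2}$, $D_n^\alpha$ is the lattice with basis $\mathbf{b}_1=\alpha\mathbf{e}_1+\overline\alpha\mathbf{e}_2$, $\mathbf{b}_2=\alpha\mathbf{e}_2+\overline\alpha\mathbf{e}_3$, $\mathbf{b}_3=\overline\alpha\mathbf{e}_1+\alpha\mathbf{e}_3$, $\mathbf{b}_4=\overline\alpha\mathbf{e}_3-\alpha\mathbf{e}_4$, and $\mathbf{b}_k=\overline\alpha\mathbf{e}_{k-1}-\alpha\mathbf{e}_k$ for $5\le k\le n$. $S(\Lambda)$ is the set of vectors of $\Lambda$ of norm $\lambda_1(\Lambda)=\min_{0\ne\mathbf{x}\in\Lambda}\|\mathbf{x}\|$. A lattice in $\mathbb{R}^n$ is generic well-rounded if $S(\Lambda)$ spans $\mathbb{R}^n$ and $|S(\Lambda)|=2n$. *)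

From HB Require Import structures.
From mathcomp Require Import all_boot all_order all_algebra.
From mathcomp Require Import all_classical all_reals.
Set Implicit Arguments. Unset Strict Implicit. Unset Printing Implicit Defensive.
Import Order.TTheory GRing.Theory Num.Theory.
Local Open Scope classical_set_scope.
Local Open Scope ring_scope.

Section Defs.
Variable R : realType.

Definition vnorm n (x : 'rV[R]_n) : R := Num.sqrt (\sum_(i < n) x 0 i ^+ 2).

(* Standard basis vector e_j, indexed from 0 (paper's e_{j+1}). *)
Definition std_e n (j : nat) : 'rV[R]_n := \row_(i < n) (if (i : nat) == j then 1 else 0).

Definition abar (a : R) : R := Num.sqrt (2 - a ^+ 2).

(* Basis of D_n^alpha; index k : 'I_n stands for the paper's b_{k+1}. *)
Definition Dbasis n (a : R) (k : 'I_n) : 'rV[R]_n :=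
  match (k : nat) with
  | 0 => a *: std_e n 0 + abar a *: std_e n 1
  | 1 => a *: std_e n 1 + abar a *: std_e n 2
  | 2 => abar a *: std_e n 0 + a *: std_e n 2
  | 3 => abar a *: std_e n 2 - a *: std_e n 3
  | k'.+1 => abar a *: std_e n k' - a *: std_e n k'.+1
  end.

Definition lattice_of n (b : 'I_n -> 'rV[R]_n) : set 'rV[R]_n :=
  [set x | exists c : 'I_n -> int, x = \sum_(i < n) (c i)%:~R *: b i].

Definition D_lattice n (a : R) : set 'rV[R]_n := lattice_of (@Dbasis n a).

Definition lambda1 n (L : set 'rV[R]_n) : R :=
  inf [set vnorm x | x in [set y | L y /\ y != 0]].

Definition min_vectors n (L : set 'rV[R]_n) : set 'rV[R]_n :=
  [set x | L x /\ x != 0 /\ vnorm x = lambda1 L].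

Definition generic_well_rounded n (L : set 'rV[R]_n) : Prop :=
  (forall v : 'rV[R]_n, exists (s : seq 'rV[R]_n) (c : 'rV[R]_n -> R),
      (forall x, x \in s -> min_vectors L x) /\ v = \sum_(x <- s) c x *: x)
  /\ (exists s : seq 'rV[R]_n, uniq s /\ size s = (2 * n)%N /\
        min_vectors L = [set x | x \in s]).

End Defs.
Arguments D_lattice {R} n a.
Arguments Dbasis {R} n a k.
Arguments std_e {R} n j.

(* Write a lattice vector as x = sum_i c_i b_i with integer c.  Every b_i has
   one coordinate +-alpha and one coordinate alpha bar, so coordinate j of x is
   alpha P_j + abar Q_j, where P_j = +-c_j and Q_j collects the alpha-bar parts.
   Splitting alpha P + abar Q = (alpha - abar) P + abar W with W = P + Q gives
     |x|^2 - 2 = (alpha - abar)^2 (|P|^2 - 1) + abar^2 (|W|^2 - 2)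
                 + 2 (alpha - abar) abar (<P, W> - 1),
   using alpha^2 + abar^2 = 2 and alpha > abar >= 0.  Explicit sums of squares
   show that |W|^2 is twice an integer and that |W|^2 and <P, W> are positive
   definite in c, so for c <> 0 all three brackets are >= 0: |x|^2 >= 2, with
   equality only if |P|^2 = sum c_i^2 = 1, i.e. x = +-b_k.  The same
   identity gives the linear independence of the b_i. *)

From HB Require Import structures.
From mathcomp Require Import all_boot all_order all_algebra.
From mathcomp Require Import all_classical all_reals.
Import Order.TTheory GRing.Theory Num.Theory.
From mathcomp Require Import ring lra zify.
Local Open Scope classical_set_scope.
Local Open Scope ring_scope.
Set Implicit Arguments. Unset Strict Implicit. Unset Printing Implicit Defensive.

Lemma sqr_eq0 (R : realType) (x : R) : x ^+ 2 = 0 -> x = 0.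
Proof. by move/eqP; rewrite sqrf_eq0 => /eqP. Qed.

(* A positive integer is at least 1: the source of all the gaps below. *)
Lemma int_ge1 (R : realType) (x : R) : x \is a Num.int -> 0 < x -> 1 <= x.
Proof. by move=> /intrP [m ->]; rewrite ltr0z ler1z; lia. Qed.

(* Index of the basis vector carrying the alpha-bar component on e_{j+1}:
   b_3 on e_1, b_1 on e_2, b_2 on e_3 (together with b_4), b_{j+2} on e_{j+1}. *)
Definition partner (j : nat) : nat :=
  match j with 0 => 2 | 1 => 0 | 2 => 1 | _ => j.+1 end.

Section Coordinates.
Variables (R : realType) (n : nat).
Implicit Types (c : 'I_n -> R) (a : R).

(* Coefficient of b_{k+1} in the combination c, extended by 0 for k >= n. *)
Definition coef c (k : nat) : R := \sum_(i < n | (i : nat) == k) c i.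

Lemma coef_ord c (i : 'I_n) : coef c i = c i.
Proof. by rewrite /coef (big_pred1 i) // => j /=; rewrite -val_eqE. Qed.

Lemma coef_out c k : (n <= k)%N -> coef c k = 0.
Proof.
move=> hk; rewrite /coef big1 // => i /eqP hi.
by move: (ltn_ord i); rewrite hi ltnNge hk.
Qed.

Lemma sum_indicator c k : \sum_(i < n) c i * ((i : nat) == k)%:R = coef c k.
Proof.
rewrite /coef [RHS]big_mkcond; apply: eq_bigr => i _.
by case: ((i : nat) == k); rewrite ?mulr1 ?mulr0.
Qed.

(* Sign of the alpha component of b_{j+1} on e_{j+1}. *)
Definition sgn (j : nat) : R := if (j < 3)%N then 1 else -1.

Lemma sgn_sqr j : sgn j ^+ 2 = 1.
Proof. by rewrite /sgn; case: ifP; rewrite ?sqrrN expr1n. Qed.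

(* The alpha part and the alpha-bar part of coordinate j of sum_i c_i b_i. *)
Definition apart c (j : nat) : R := sgn j * coef c j.
Definition bpart c (j : nat) : R := coef c (partner j) + (j == 2)%:R * coef c 3.

Lemma Dbasis_entry a (i j : 'I_n) :
  Dbasis n a i 0 j = a * (sgn j * ((i : nat) == j)%:R)
    + abar a * (((i : nat) == partner j)%:R + ((j : nat) == 2)%:R * ((i : nat) == 3)%:R).
Proof.
case: i => i Hi; case: j => j Hj; rewrite /Dbasis /std_e /sgn /=.
do 4?[case: i Hi => [|i] Hi]; do 4?[case: j Hj => [|j] Hj];
  rewrite ?mxE /= ?(mulr0, mulr1, addr0, add0r, mul0r, subr0, sub0r, oppr0, mulrN1) //.
  by case: i {Hi}.
rewrite !eqSS [(j == i)%N]eq_sym [(j.+1 == i)%N]eq_sym.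
by case: (i == j)%N; case: (i == j.+1)%N; rewrite /=; ring.
Qed.

Definition Dcomb a c : 'rV[R]_n := \sum_i c i *: Dbasis n a i.

Lemma Dcomb_entry a c (j : 'I_n) :
  Dcomb a c 0 j = a * apart c j + abar a * bpart c j.
Proof.
rewrite summxE; under eq_bigr => i _ do rewrite mxE Dbasis_entry.
transitivity (a * sgn j * \sum_i c i * ((i : nat) == j)%:R
  + abar a * \sum_i c i * ((i : nat) == partner j)%:R
  + abar a * ((j : nat) == 2)%:R * \sum_i c i * ((i : nat) == 3)%:R).
  by rewrite !mulr_sumr -!big_split; apply: eq_bigr => i _ /=; ring.
by rewrite !sum_indicator /apart /bpart; ring.
Qed.

End Coordinates.

Section QuadraticForms.
Variables (R : realType) (n : nat) (c : 'I_n -> R).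
Hypothesis hn : (3 <= n)%N.

(* Writing x = sum_i c_i b_i as x = (alpha - alpha bar) P + alpha bar W, where
   P_j = apart c j and W_j = apart c j + bpart c j, the squared norm of x is a
   combination of |P|^2, |W|^2 and <P, W>.  W ranges over the root lattice D_n. *)
Definition normP : R := \sum_(i < n) c i ^+ 2.
Definition normW : R := \sum_(0 <= j < n) (apart c j + bpart c j) ^+ 2.
Definition dotPW : R := \sum_(0 <= j < n) apart c j * (apart c j + bpart c j).

Definition tailsq : R := \sum_(3 <= j < n) (coef c j.+1 - coef c j) ^+ 2.

(* Half of normW, an integer polynomial in the coefficients. *)
Definition halfW : R :=
  coef c 0 ^+ 2 + coef c 1 ^+ 2 + coef c 2 ^+ 2 + coef c 3 ^+ 2
  + coef c 0 * coef c 1 + coef c 0 * coef c 2 + coef c 1 * coef c 2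
  + coef c 1 * coef c 3 + coef c 2 * coef c 3
  + \sum_(3 <= j < n) (coef c j.+1 ^+ 2 - coef c j * coef c j.+1).

Lemma parts_tail j : (3 <= j)%N -> apart c j = - coef c j /\ bpart c j = coef c j.+1.
Proof. by case: j => [|[|[|j]]] // _; rewrite /apart /bpart /sgn /= mulN1r mul0r addr0. Qed.

Lemma tail_telescope :
  \sum_(3 <= j < n) (coef c j.+1 ^+ 2 - coef c j ^+ 2) = - coef c 3 ^+ 2.
Proof.
rewrite (telescope_sumr (fun j => coef c j ^+ 2)) //.
by rewrite coef_out // expr0n /= sub0r.
Qed.

Lemma sum_head3 (F : nat -> R) :
  \sum_(0 <= j < n) F j = F 0%N + F 1%N + F 2%N + \sum_(3 <= j < n) F j.
Proof. by do 3 (rewrite big_ltn; last lia); rewrite !addrA. Qed.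

Lemma normW_expl : normW = (coef c 0 + coef c 2) ^+ 2 + (coef c 1 + coef c 0) ^+ 2
  + (coef c 2 + coef c 1 + coef c 3) ^+ 2 + tailsq.
Proof.
rewrite /normW sum_head3 /tailsq.
rewrite (@eq_big_nat _ _ _ 3 n _ (fun j => (coef c j.+1 - coef c j) ^+ 2)); last first.
  by move=> j /andP [hj _]; have [-> ->] := parts_tail hj; congr (_ ^+ 2); ring.
by rewrite /apart /bpart /sgn /= !mul1r !mul0r !addr0; ring.
Qed.

Lemma dotPW_expl : 2 * dotPW = (coef c 0 + coef c 1 + coef c 2) ^+ 2
  + coef c 0 ^+ 2 + coef c 1 ^+ 2 + (coef c 2 + coef c 3) ^+ 2 + tailsq.
Proof.
have -> : tailsq = 2 * \sum_(3 <= j < n) apart c j * (apart c j + bpart c j)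
                   - coef c 3 ^+ 2.
  rewrite -tail_telescope mulr_sumr -big_split /tailsq.
  apply: eq_big_nat => j /andP [hj _]; have [-> ->] := parts_tail hj => /=; ring.
by rewrite /dotPW sum_head3 /apart /bpart /sgn /= !mul1r !mul0r !addr0; ring.
Qed.

Lemma normW_halfW : normW = 2 * halfW.
Proof.
rewrite normW_expl.
have -> : tailsq = 2 * \sum_(3 <= j < n) (coef c j.+1 ^+ 2 - coef c j * coef c j.+1)
                   + coef c 3 ^+ 2.
  rewrite -[coef c 3 ^+ 2]opprK -tail_telescope mulr_sumr -sumrB /tailsq.
  by apply: eq_big_nat => j _ /=; ring.
by rewrite /halfW; ring.
Qed.

Lemma tailsq_ge0 : 0 <= tailsq.
Proof. by apply: sumr_ge0 => j _; apply: sqr_ge0. Qed.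

(* If the chain contributes nothing, the coefficients of b_4, ..., b_n vanish:
   they are all equal to the (zero) coefficient of the missing b_{n+1}. *)
Lemma tailsq_eq0 : tailsq = 0 -> forall k, (3 <= k)%N -> coef c k = 0.
Proof.
move=> hT.
have step j : (3 <= j < n)%N -> coef c j.+1 = coef c j.
  move=> hj; apply/eqP; rewrite -subr_eq0 -sqrf_eq0; apply/eqP.
  move: hT; rewrite /tailsq (bigD1_seq j) ?mem_index_iota ?iota_uniq //=.
  have : 0 <= \sum_(i <- index_iota 3 n | i != j) (coef c i.+1 - coef c i) ^+ 2.
    by apply: sumr_ge0 => i _; apply: sqr_ge0.
  have := sqr_ge0 (coef c j.+1 - coef c j); lra.
suff down t : (t <= n - 3)%N -> coef c (n - t) = 0.
  move=> k hk; have [hnk|hkn] := leqP n k; first by rewrite coef_out.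
  by rewrite -(subKn (ltnW hkn)); apply: down; lia.
elim: t => [|t IH] ht; first by rewrite subn0 coef_out.
by rewrite -step; [rewrite -subSn; [apply: IH|]|]; lia.
Qed.

Lemma normW_ge0 : 0 <= normW.
Proof. by apply: sumr_ge0 => j _; apply: sqr_ge0. Qed.

Lemma dotPW_ge0 : 0 <= dotPW.
Proof.
suff : 0 <= 2 * dotPW by lra.
rewrite dotPW_expl; have := tailsq_ge0.
have := sqr_ge0 (coef c 0 + coef c 1 + coef c 2); have := sqr_ge0 (coef c 0).
have := sqr_ge0 (coef c 1); have := sqr_ge0 (coef c 2 + coef c 3); lra.
Qed.

Hypothesis c_neq0 : exists i, c i != 0.

Lemma normP_gt0 : 0 < normP.
Proof.
case: c_neq0 => i hi; rewrite /normP (bigD1 i) //=.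
have : 0 <= \sum_(j < n | j != i) c j ^+ 2 by apply: sumr_ge0 => j _; apply: sqr_ge0.
have : 0 < c i ^+ 2 by rewrite exprn_even_gt0.
lra.
Qed.

Lemma low_coefs_neq0 : tailsq = 0 ->
  coef c 0 = 0 -> coef c 1 = 0 -> coef c 2 = 0 -> False.
Proof.
move=> hT h0 h1 h2; case: c_neq0 => i /eqP; apply; rewrite -coef_ord.
by case: (val i) => [|[|[|k]]] //; apply: tailsq_eq0.
Qed.

Lemma normW_gt0 : 0 < normW.
Proof.
rewrite lt_neqAle normW_ge0 andbT eq_sym; apply/eqP; rewrite normW_expl => hW.
have := tailsq_ge0; have := sqr_ge0 (coef c 0 + coef c 2).
have := sqr_ge0 (coef c 1 + coef c 0); have := sqr_ge0 (coef c 2 + coef c 1 + coef c 3).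
move=> hA hB hC hT.
have hT0 : tailsq = 0 by lra.
have /sqr_eq0 h02 : (coef c 0 + coef c 2) ^+ 2 = 0 by lra.
have /sqr_eq0 h10 : (coef c 1 + coef c 0) ^+ 2 = 0 by lra.
have /sqr_eq0 h213 : (coef c 2 + coef c 1 + coef c 3) ^+ 2 = 0 by lra.
have h3 := tailsq_eq0 hT0 (leqnn 3).
by apply: (low_coefs_neq0 hT0); lra.
Qed.

Lemma dotPW_gt0 : 0 < dotPW.
Proof.
rewrite lt_neqAle dotPW_ge0 andbT eq_sym; apply/eqP => hF.
have := dotPW_expl; rewrite hF mulr0 => /esym hF2.
have := tailsq_ge0; have := sqr_ge0 (coef c 0 + coef c 1 + coef c 2).
have := sqr_ge0 (coef c 0); have := sqr_ge0 (coef c 1).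
have := sqr_ge0 (coef c 2 + coef c 3).
move=> hD hC hB hA hT.
have hT0 : tailsq = 0 by lra.
have /sqr_eq0 h0 : coef c 0 ^+ 2 = 0 by lra.
have /sqr_eq0 h1 : coef c 1 ^+ 2 = 0 by lra.
have /sqr_eq0 h23 : (coef c 2 + coef c 3) ^+ 2 = 0 by lra.
have h3 := tailsq_eq0 hT0 (leqnn 3).
by apply: (low_coefs_neq0 hT0) => //; lra.
Qed.

End QuadraticForms.

Section Integrality.
Variables (R : realType) (n : nat) (c : 'I_n -> R).

Definition int_coefs : Prop := forall i, c i \is a Num.int.
Hypothesis c_int : int_coefs.

Lemma coef_int k : coef c k \is a Num.int.
Proof. by apply: rpred_sum => i _; apply: c_int. Qed.

Lemma normP_int : normP c \is a Num.int.
Proof. by apply: rpred_sum => i _; rewrite rpredX. Qed.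

Lemma dotPW_int : dotPW c \is a Num.int.
Proof.
have sgn_int j : (sgn R j) \is a Num.int by rewrite /sgn; case: ifP; rewrite ?rpredN rpred1.
apply: rpred_sum => j _; rewrite /apart /bpart.
by rewrite !(rpredM, rpredD, sgn_int, coef_int, rpred_nat).
Qed.

Lemma halfW_int : halfW c \is a Num.int.
Proof.
rewrite /halfW !(rpredM, rpredD, rpredX, coef_int) //.
by apply: rpred_sum => j _; rewrite !(rpredM, rpredB, rpredX, coef_int).
Qed.

End Integrality.

Lemma normP_eq1 (R : realType) n (c : 'I_n -> R) : int_coefs c -> normP c = 1 ->
  exists k, (c k = 1 \/ c k = -1) /\ forall i, i != k -> c i = 0.
Proof.
move=> c_int hP.
have [k hk] : exists k, c k != 0.
  apply/existsP; apply: contraT; rewrite negb_exists => /forallP c0.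
  move: hP; rewrite /normP big1 => [/eqP|i _]; first by rewrite eq_sym oner_eq0.
  by move/negPn: (c0 i) => /eqP ->; rewrite expr0n.
move: hP; rewrite /normP (bigD1 k) //= => hP.
have hrest : 0 <= \sum_(j < n | j != k) c j ^+ 2.
  by apply: sumr_ge0 => j _; apply: sqr_ge0.
have : 1 <= c k ^+ 2 by apply: int_ge1; [rewrite rpredX | rewrite exprn_even_gt0].
move=> hk1; have hk2 : c k ^+ 2 = 1 by lra.
have hrest0 : \sum_(j < n | j != k) c j ^+ 2 = 0 by lra.
exists k; split.
  by move/eqP: hk2; rewrite sqrf_eq1 => /orP [] /eqP ->; [left|right].
move=> i hik; apply: sqr_eq0; apply: (psumr_eq0P _ hrest0) => // j _.
exact: sqr_ge0.
Qed.

Lemma inf_attained (R : realType) (S : set R) (m : R) : S m -> lbound S m -> inf S = m.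
Proof.
move=> Sm lbm; apply/eqP; rewrite eq_le; apply/andP; split.
  by apply: (ge_inf _ Sm); exists m.
by apply: lb_le_inf => //; exists m.
Qed.

Definition sqnorm (R : realType) n (x : 'rV[R]_n) : R := \sum_(j < n) x 0 j ^+ 2.

Lemma sqnorm_ge0 (R : realType) n (x : 'rV[R]_n) : 0 <= sqnorm x.
Proof. by apply: sumr_ge0 => j _; apply: sqr_ge0. Qed.

Lemma vnormN (R : realType) n (x : 'rV[R]_n) : vnorm (- x) = vnorm x.
Proof. by rewrite /vnorm; congr Num.sqrt; apply: eq_bigr => j _; rewrite mxE sqrrN. Qed.

Lemma sqnorm_pair (R : realType) n (u v : R) p q : p != q -> (p < n)%N -> (q < n)%N ->
  sqnorm (u *: std_e n p + v *: std_e n q) = u ^+ 2 + v ^+ 2.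
Proof.
move=> hpq hp hq.
have sum_at (w : R) k : (k < n)%N -> \sum_(j < n) w * ((j : nat) == k)%:R = w.
  move=> hk; rewrite (sum_indicator (fun _ : 'I_n => w)).
  by rewrite -[k]/(nat_of_ord (Ordinal hk)) coef_ord.
rewrite /sqnorm -(sum_at (u ^+ 2) p hp) -(sum_at (v ^+ 2) q hq) -big_split.
apply: eq_bigr => j _; rewrite !mxE.
have [hjp|hjp] := eqVneq (j : nat) p; have [hjq|hjq] := eqVneq (j : nat) q;
  rewrite /= ?mulr1 ?mulr0 ?addr0 ?add0r ?expr0n //.
by move: hpq; rewrite -hjp -hjq eqxx.
Qed.

Lemma abar_facts (R : realType) (a : R) : 1 < a -> a <= Num.sqrt 2 ->
  [/\ a ^+ 2 + abar a ^+ 2 = 2, 0 <= abar a & abar a < a].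
Proof.
move=> ha1 ha2; have hs2 := sqr_sqrtr (ler0n R 2); have hs0 := sqrtr_ge0 (2%:R : R).
have a2 : a ^+ 2 <= 2 by nra.
have hb : abar a ^+ 2 = 2 - a ^+ 2 by rewrite /abar sqr_sqrtr // subr_ge0.
have hb0 : 0 <= abar a by apply: sqrtr_ge0.
split=> //; [lra | nra].
Qed.

Section Lattice.
Variables (R : realType) (n : nat) (a : R).
Hypotheses (hn : (3 <= n)%N) (a_sqr : a ^+ 2 + abar a ^+ 2 = 2)
  (abar_ge0 : 0 <= abar a) (abar_lt : abar a < a).
Implicit Types (c : 'I_n -> R) (x : 'rV[R]_n).

(* Since a P + abar Q = (a - abar) P + abar (P + Q), the squared norm of a
   lattice vector is a positive combination of the three forms. *)
Lemma sqnorm_Dcomb c : sqnorm (Dcomb a c) =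
  (a - abar a) ^+ 2 * normP c + abar a ^+ 2 * normW c
  + 2 * (a - abar a) * abar a * dotPW c.
Proof.
rewrite /sqnorm; under eq_bigr => j _ do rewrite Dcomb_entry.
rewrite /normW /dotPW !big_mkord /normP !mulr_sumr -!big_split.
apply: eq_bigr => j _ /=; rewrite -coef_ord.
have -> : coef c j ^+ 2 = apart c j ^+ 2 by rewrite /apart exprMn sgn_sqr mul1r.
ring.
Qed.

Lemma sqnorm_Dcomb_sub2 c : sqnorm (Dcomb a c) - 2 =
  (a - abar a) ^+ 2 * (normP c - 1) + abar a ^+ 2 * (normW c - 2)
  + 2 * (a - abar a) * abar a * (dotPW c - 1).
Proof.
by rewrite sqnorm_Dcomb -{2}a_sqr; ring.
Qed.

Lemma sqnorm_Dcomb_gt0 c : (exists i, c i != 0) -> 0 < sqnorm (Dcomb a c).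
Proof.
(* lra only reads the local context, so the section hypotheses are copied in. *)
move=> c_neq0; have hb0 := abar_ge0; have hba := abar_lt; rewrite sqnorm_Dcomb.
have hP := normP_gt0 c_neq0; have hW := normW_ge0 c; have hF := dotPW_ge0 c hn.
have hd : 0 < a - abar a by lra.
have t1 : 0 < (a - abar a) ^+ 2 * normP c by rewrite mulr_gt0 ?exprn_gt0.
have t2 : 0 <= abar a ^+ 2 * normW c by rewrite mulr_ge0 ?sqr_ge0.
have t3 : 0 <= 2 * (a - abar a) * abar a * dotPW c by rewrite !mulr_ge0 // ltW.
lra.
Qed.

Lemma Dcomb_eq0 c : Dcomb a c = 0 -> forall i, c i = 0.
Proof.
move=> hc i; apply/eqP; apply: contraT => hci.
have := sqnorm_Dcomb_gt0 (ex_intro _ i hci).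
by rewrite hc /sqnorm big1 ?ltxx // => j _; rewrite mxE expr0n.
Qed.

Lemma sqnorm_Dcomb_ge2 c : int_coefs c -> (exists i, c i != 0) ->
  2 <= sqnorm (Dcomb a c) /\ (sqnorm (Dcomb a c) = 2 -> normP c = 1).
Proof.
move=> c_int c_neq0; have hb0 := abar_ge0; have hba := abar_lt.
have hP := int_ge1 (normP_int c_int) (normP_gt0 c_neq0).
have hF := int_ge1 (dotPW_int c_int) (dotPW_gt0 hn c_neq0).
have hW : 2 <= normW c.
  have hH : 1 <= halfW c.
    apply: int_ge1 (halfW_int c_int) _.
    by have := normW_gt0 hn c_neq0; rewrite normW_halfW //; lra.
  by rewrite normW_halfW //; lra.
have := sqnorm_Dcomb_sub2 c.
set d := a - abar a; have hd : 0 < d by rewrite /d; lra.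
have t1 : 0 <= d ^+ 2 * (normP c - 1) by rewrite mulr_ge0 ?sqr_ge0 ?subr_ge0.
have t2 : 0 <= abar a ^+ 2 * (normW c - 2) by rewrite mulr_ge0 ?sqr_ge0 ?subr_ge0.
have t3 : 0 <= 2 * d * abar a * (dotPW c - 1) by rewrite !mulr_ge0 ?subr_ge0 // ltW.
move=> hQ; split; first lra.
move=> h2; have /eqP : d ^+ 2 * (normP c - 1) = 0 by lra.
by rewrite mulf_eq0 sqrf_eq0 gt_eqF //= subr_eq0 => /eqP.
Qed.

Lemma Dcomb_single c k (e : R) :
  c k = e -> (forall i, i != k -> c i = 0) -> Dcomb a c = e *: Dbasis n a k.
Proof.
move=> hk hi; rewrite /Dcomb (bigD1 k) //= hk big1 ?addr0 // => i hik.
by rewrite hi // scale0r.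
Qed.

Definition delta (k : 'I_n) : 'I_n -> R := fun i => (i == k)%:R.

Lemma Dcomb_delta k : Dcomb a (delta k) = Dbasis n a k.
Proof. by rewrite (@Dcomb_single _ k 1) ?scale1r /delta ?eqxx // => i /negbTE ->. Qed.

Lemma DcombD c1 c2 : Dcomb a (fun i => c1 i + c2 i) = Dcomb a c1 + Dcomb a c2.
Proof. by rewrite /Dcomb -big_split; apply: eq_bigr => i _; rewrite scalerDl. Qed.

Lemma DcombN c : Dcomb a (fun i => - c i) = - Dcomb a c.
Proof. by rewrite /Dcomb -sumrN; apply: eq_bigr => i _; rewrite scaleNr. Qed.

Lemma D_lattice_Dcomb (m : 'I_n -> int) : D_lattice n a (Dcomb a (fun i => (m i)%:~R)).
Proof. by exists m. Qed.

Lemma D_latticeE x : D_lattice n a x -> exists2 c, int_coefs c & x = Dcomb a c.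
Proof. by case=> m ->; exists (fun i => (m i)%:~R) => // i; apply: intr_int. Qed.

Lemma D_lattice_short x : D_lattice n a x -> x != 0 ->
  2 <= sqnorm x /\ (sqnorm x = 2 -> exists k, x = Dbasis n a k \/ x = - Dbasis n a k).
Proof.
case/D_latticeE => c c_int -> hx.
have c_neq0 : exists i, c i != 0.
  apply/existsP; apply: contraT; rewrite negb_exists => /forallP c0.
  move: hx; rewrite /Dcomb big1 ?eqxx // => i _.
  by move/negPn: (c0 i) => /eqP ->; rewrite scale0r.
have [hge heq] := sqnorm_Dcomb_ge2 c_int c_neq0; split => // /heq.
case/(normP_eq1 c_int) => k [hk hi]; exists k.
by case: hk => hk; [left | right]; rewrite (Dcomb_single hk hi) ?scale1r ?scaleN1r.
Qed.

Lemma delta_intr k : delta k = fun i => ((i == k)%:Z)%:~R.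
Proof. by apply: funext => i; rewrite -pmulrn. Qed.

Lemma Dbasis_in k : D_lattice n a (Dbasis n a k).
Proof. by rewrite -Dcomb_delta delta_intr; apply: D_lattice_Dcomb. Qed.

Lemma Dbasis_opp_in k : D_lattice n a (- Dbasis n a k).
Proof.
rewrite -Dcomb_delta -DcombN delta_intr.
have -> : (fun i => - ((i == k)%:Z)%:~R) = fun i => (- (i == k)%:Z)%:~R :> R.
  by apply: funext => i; rewrite intrN.
exact: D_lattice_Dcomb.
Qed.

Lemma sqnorm_Dbasis k : sqnorm (Dbasis n a k) = 2.
Proof.
rewrite -a_sqr.
case: k => k hk; rewrite /Dbasis /=.
case: k hk => [|[|[|[|k]]]] hk /=; rewrite -?scaleNr sqnorm_pair ?sqrrN; try lia; ring.
Qed.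

(* By independence, the 2n vectors +-b_k are nonzero and pairwise distinct. *)
Lemma Dbasis_neq0 k : Dbasis n a k != 0.
Proof.
apply/eqP => hb; have := Dcomb_eq0 (c := delta k); rewrite Dcomb_delta => /(_ hb k).
by rewrite /delta eqxx => /eqP; rewrite oner_eq0.
Qed.

Lemma Dbasis_inj : injective (Dbasis n a).
Proof.
move=> i j hij; apply/eqP; apply: contraT => hne.
have := Dcomb_eq0 (c := fun l => delta i l + - delta j l).
rewrite DcombD DcombN !Dcomb_delta hij subrr => /(_ erefl i).
by rewrite /delta eqxx (negbTE hne) oppr0 addr0 => /eqP; rewrite oner_eq0.
Qed.

Lemma Dbasis_neq_opp i j : Dbasis n a i != - Dbasis n a j.
Proof.
apply/eqP => hij.
have := Dcomb_eq0 (c := fun l => delta i l + delta j l).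
rewrite DcombD !Dcomb_delta hij addNr => /(_ erefl i).
by rewrite /delta eqxx; case: (i == j) => /=; lra.
Qed.

Lemma lambda1_D : lambda1 (D_lattice n a) = Num.sqrt 2.
Proof.
have n_gt0 : (0 < n)%N by lia.
apply: inf_attained.
  exists (Dbasis n a (Ordinal n_gt0)); first by split; [apply: Dbasis_in | apply: Dbasis_neq0].
  by rewrite /vnorm -/(sqnorm _) sqnorm_Dbasis.
move=> _ [x [xL x0] <-]; rewrite /vnorm -/(sqnorm _) ler_sqrt ?sqnorm_ge0 //.
by case: (D_lattice_short xL x0).
Qed.

Lemma min_vectors_D : min_vectors (D_lattice n a) =
  [set x | exists k : 'I_n, x = Dbasis n a k \/ x = - Dbasis n a k].
Proof.
apply/seteqP; split => x; rewrite /min_vectors /= lambda1_D.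
  move=> [xL [x0 hx]]; apply: (D_lattice_short xL x0).2.
  rewrite -[sqnorm x]sqr_sqrtr ?sqnorm_ge0 //; change (vnorm x ^+ 2 = 2).
  by rewrite hx sqr_sqrtr.
case=> k [->|->]; rewrite ?vnormN /vnorm -/(sqnorm _) sqnorm_Dbasis ?oppr_eq0.
  by split; [apply: Dbasis_in | split; [apply: Dbasis_neq0|]].
by split; [apply: Dbasis_opp_in | split; [apply: Dbasis_neq0|]].
Qed.

(* The basis matrix is invertible, so b_1, ..., b_n span R^n. *)
Lemma Dcomb_onto (v : 'rV[R]_n) : exists c, v = Dcomb a c.
Proof.
set B : 'M[R]_n := \matrix_i Dbasis n a i.
have BE (w : 'rV[R]_n) : w *m B = Dcomb a (fun i => w 0 i).
  by rewrite mulmx_sum_row /Dcomb; apply: eq_bigr => i _; rewrite rowK.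
have B_unit : B \in unitmx.
  rewrite -row_free_unit; apply: inj_row_free => w; rewrite BE => hw.
  by apply/rowP => j; rewrite mxE; apply: Dcomb_eq0 hw j.
by exists (fun i => (v *m invmx B) 0 i); rewrite -BE mulmxKV.
Qed.

Lemma min_vectors_span (v : 'rV[R]_n) : exists (s : seq 'rV[R]_n) (w : 'rV[R]_n -> R),
  (forall x, x \in s -> min_vectors (D_lattice n a) x) /\ v = \sum_(x <- s) w x *: x.
Proof.
have [c ->] := Dcomb_onto v.
exists [seq Dbasis n a i | i <- enum 'I_n], (fun x => \sum_(i | Dbasis n a i == x) c i).
split; first by move=> x /mapP [i _ ->]; rewrite min_vectors_D; exists i; left.
rewrite big_map big_enum /=; apply: eq_big => [i|i _] //.
by rewrite (big_pred1 i) // => j /=; rewrite (inj_eq Dbasis_inj).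
Qed.

Lemma min_vectors_enum : exists s : seq 'rV[R]_n, uniq s /\ size s = (2 * n)%N /\
  min_vectors (D_lattice n a) = [set x | x \in s].
Proof.
set s1 := [seq Dbasis n a i | i <- enum 'I_n].
set s2 := [seq - Dbasis n a i | i <- enum 'I_n].
exists (s1 ++ s2); split; last split.
- rewrite cat_uniq; apply/and3P; split.
  + by rewrite map_inj_uniq ?enum_uniq //; apply: Dbasis_inj.
  + apply/hasPn => x /mapP [j _ ->]; apply/mapP => -[i _ hij].
    by move/eqP: (Dbasis_neq_opp i j); rewrite hij.
  + rewrite map_inj_uniq ?enum_uniq // => i j /eqP; rewrite eqr_opp => /eqP.
    exact: Dbasis_inj.
- by rewrite size_cat !size_map -enumT size_enum_ord; lia.
rewrite min_vectors_D; apply/seteqP; split => x /=.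
  case=> k [->|->]; rewrite mem_cat; apply/orP; [left|right];
    by apply/mapP; exists k; rewrite ?mem_enum.
by rewrite mem_cat => /orP [] /mapP [k _ ->]; exists k; [left|right].
Qed.

End Lattice.

Unset Implicit Arguments.
Theorem mainTheorem15 (R : realType) (n : nat) (a : R)
  (hn : (3 <= n)%N) (ha1 : 1 < a) (ha2 : a <= Num.sqrt 2) :
  min_vectors (D_lattice n a) =
    [set x | exists k : 'I_n, x = Dbasis n a k \/ x = - Dbasis n a k]
  /\ lambda1 (D_lattice n a) ^+ 2 = 2
  /\ generic_well_rounded (D_lattice n a).
Proof.
have [a_sqr abar_ge0 abar_lt] := abar_facts ha1 ha2.
split; first exact: min_vectors_D.
split; first by rewrite lambda1_D // sqr_sqrtr.
split; [exact: min_vectors_span | exact: min_vectors_enum].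
Qed.
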